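(* Let $\mathcal{F}$ be a monotone family of graphs (closed under taking subgraphs) and let $C\ge 1$. Suppose there is a strategy $A$ for the $k$-CTP whose competitive ratio is at most $C$ on every road map $(G,E_* )$ with $|E_*|\le k$ such that $G\in\mathcal{F}$ and $G$ has no articulation point. Then there is a strategy $A'$ whose competitive ratio is at most $C$ on every road map $(G,E_* )$ with $|E_*|\le k$ and $G\in\mathcal{F}$.
   Context: The $k$-Canadian Traveller Problem ($k$-CTP): we are given an undirected connected graph $G=(V,E,\omega)$ with weights $\omega:E\to\mathbb{Q}^+$, a source $s\in V$ and a target $t\in V$, and a hidden set $E_*\subsetneq E$ of blocked edges with $|E_*|\le k$. The pair $(G,E_* )$ is a road map if $s$ and $t$ are connected in $G\setminus E_*$; only road maps are considered. A traveller starts at $s$ and must reach $t$. Initially $E_*$ is unknown; the traveller learns whether an edge is blocked exactly when he visits one of its endpoints. A (deterministic) strategy is an online algorithm which, given $G$, $\omega$, $s$, $t$, $k$, the sequence of vertices visited so far and the set of blocked edges revealed so far, chooses the next vertex, a neighbour of the current vertex through an edge not known to be blocked. The cost of the resulting $(s,t)$-walk is the sum of the weights of the traversed edges (with multiplicity). The competitive ratio of $A$ on $(G,E_* )$ is this cost divided by $d_{E_*}(s,t)$, the length of a shortest $(s,t)$-path in $G\setminus E_*$. A vertex $v$ is an articulation point of a connected graph $G$ if $G\setminus\{v\}$ is disconnected. *)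

(* Graphs: a finite ambient vertex type V; a graph is a
   vertex set S : {set V} and an edge set E : {set {set V}} of 2-subsets of S. *)
From mathcomp Require Import all_boot all_order all_algebra.
From mathcomp Require Import reals.
Set Implicit Arguments. Unset Strict Implicit. Unset Printing Implicit Defensive.
Import Order.TTheory GRing.Theory Num.Theory.

Local Open Scope ring_scope.
Section CTP.
Variable V : finType.

Definition wf_graph (S : {set V}) (E : {set {set V}}) : Prop :=
  forall e, e \in E -> #|e| = 2 /\ e \subset S.

Definition adj (E : {set {set V}}) : rel V := fun x y => [set x; y] \in E.

Definition gconnected (S : {set V}) (E : {set {set V}}) : Prop :=
  forall x y, x \in S -> y \in S -> connect (adj E) x y.

Definition del_vertex (S : {set V}) (E : {set {set V}}) (v : V) :=
  (S :\ v, [set e in E | v \notin e]).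

Definition is_articulation_point (S : {set V}) (E : {set {set V}}) (v : V) :=
  v \in S /\ ~ gconnected (del_vertex S E v).1 (del_vertex S E v).2.

Definition no_articulation_point (S : {set V}) (E : {set {set V}}) :=
  forall v, ~ is_articulation_point S E v.

Definition monotone_family (F : {set V} -> {set {set V}} -> Prop) : Prop :=
  forall (S S' : {set V}) (E E' : {set {set V}}), wf_graph S' E' -> S' \subset S -> E' \subset E ->
    F S E -> F S' E'.

(* A deterministic strategy: given the vertex set, edge set, weights, s, t, k,
   the sequence of vertices visited so far (starting with s, last = current
   vertex) and the set of blocked edges revealed so far, returns the next vertex. *)
Definition strategy :=
  {set V} -> {set {set V}} -> ({set V} -> rat) -> V -> V -> nat ->
  seq V -> {set {set V}} -> V.

Definition revealed (Es : {set {set V}}) (h : seq V) : {set {set V}} :=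
  [set e in Es | has (fun x => x \in e) h].

(* the walk x :: p taken after n moves (the traveller stops upon reaching t);
   returned as the tail p (the walk starts at s) *)
Fixpoint run (A : strategy) (S : {set V}) (E : {set {set V}}) (w : {set V} -> rat) (s t : V) (k : nat) (Es : {set {set V}})
    (n : nat) : seq V :=
  match n with
  | 0 => [::]
  | n'.+1 =>
      let p := run A S E w s t k Es n' in
      if last s p == t then p
      else rcons p (A S E w s t k (s :: p) (revealed Es (s :: p)))
  end.

Fixpoint walk_cost (w : {set V} -> rat) (x : V) (p : seq V) : rat :=
  match p with
  | [::] => 0
  | y :: p' => w [set x; y] + walk_cost w y p'
  end.

Definition open_adj (E Es : {set {set V}}) : rel V := adj (E :\: Es).

Definition shortest_dist (E Es : {set {set V}}) (w : {set V} -> rat)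
    (s t : V) (d : rat) : Prop :=
  (exists p, path (open_adj E Es) s p /\ last s p = t /\ walk_cost w s p = d) /\
  (forall p, path (open_adj E Es) s p -> last s p = t -> d <= walk_cost w s p).

Definition road_map (S : {set V}) (E : {set {set V}}) (w : {set V} -> rat)
    (s t : V) (k : nat) (Es : {set {set V}}) : Prop :=
  [/\ wf_graph S E, gconnected S E, (forall e, e \in E -> 0 < w e),
      s \in S /\ t \in S &
      [/\ Es \proper E, (#|Es| <= k)%N & connect (open_adj E Es) s t]].

Definition ratio_at_most (R : realType) (A : strategy) (S : {set V})
    (E : {set {set V}}) (w : {set V} -> rat) (s t : V) (k : nat)
    (Es : {set {set V}}) (C : R) :=
  exists n, let p := run A S E w s t k Es n in
    [/\ last s p = t, path (open_adj E Es) s p &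
        forall d, shortest_dist E Es w s t d ->
          ratr (walk_cost w s p) <= C * ratr d].

End CTP.

(* Let v be a cut vertex of G.  If v separates s from t, every (s,t)-walk of
   G \ E_* passes through v and splits into an (s,v)-walk inside the part of G
   on the side of s and a (v,t)-walk inside the part on the side of t.  So
   running the strategy on the first part and then, from v, on the second one
   costs at most C times the length of the two pieces, hence at most C times
   the length of the walk.  If v does not separate s from t, every
   (s,t)-walk can be shortcut, at no extra cost, into the part of G containing
   s and t.  These parts are subgraphs of G (hence in F) with fewer vertices,
   so recursing on cut vertices ends in graphs without articulation point,
   where A is run with the blocked edges outside the current part hidden. *)

From mathcomp Require Import all_boot all_order all_algebra.
From mathcomp Require Import reals.
Set Implicit Arguments. Unset Strict Implicit. Unset Printing Implicit Defensive.
Import Order.TTheory GRing.Theory Num.Theory.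
Local Open Scope ring_scope.

Section Policies.
Variable T : eqType.
Implicit Types (g : seq T -> T) (s t v : T) (p r : seq T).

Fixpoint play g s t n : seq T :=
  if n is n'.+1 then
    let p := play g s t n' in if last s p == t then p else rcons p (g (s :: p))
  else [::].

(* The walks produced by [play], described without fuel: [p] is what the
   policy [g] plays from [s] as long as [t] has not been reached. *)
Definition follows g s t p :=
  forall i, (i < size p)%N -> nth s p i = g (s :: take i p) /\ last s (take i p) != t.

Lemma follows_rcons g s t p x :
  follows g s t (rcons p x) <-> [/\ follows g s t p, x = g (s :: p) & last s p != t].
Proof.
split=> [f | [f ->{x} nt] i].
  have [gx nt] : x = g (s :: p) /\ last s p != t.
    have [] := f (size p); first by rewrite size_rcons.
    by rewrite nth_rcons ltnn eqxx -cats1 take_size_cat.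
  split=> // i lt; have [] := f i; first by rewrite size_rcons ltnW.
  by rewrite nth_rcons lt -cats1 takel_cat ?(ltnW lt) // => -> ->.
rewrite size_rcons ltnS leq_eqVlt => /predU1P [->|lt].
  by rewrite nth_rcons ltnn eqxx -cats1 take_size_cat.
by rewrite nth_rcons lt -cats1 takel_cat ?(ltnW lt) //; apply: f.
Qed.

Lemma play_follows g s t n : follows g s t (play g s t n).
Proof. by elim: n => //= n IH; case: eqP => // /eqP nt; apply/follows_rcons. Qed.

Lemma follows_play g s t p : follows g s t p -> play g s t (size p) = p.
Proof.
elim/last_ind: p => // p x IH /follows_rcons [f -> nt].
by rewrite size_rcons /= IH // (negbTE nt).
Qed.

Lemma eq_follows g g' s t p :
  (forall h, g (s :: h) = g' (s :: h)) -> follows g s t p -> follows g' s t p.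
Proof. by move=> gg' f i lt; rewrite -gg'; apply: f. Qed.

Lemma follows_take g s t p n : follows g s t p -> follows g s t (take n p).
Proof.
move=> f i; rewrite size_take_min leq_min => /andP [lt_n lt_p].
by rewrite nth_take // take_takel ?(ltnW lt_n) //; apply: f.
Qed.

Lemma follows_notin_belast g s t p : follows g s t p -> t \notin belast s p.
Proof.
elim/last_ind: p => // p x IH /follows_rcons [/IH nt _ ntl].
by rewrite belast_rcons lastI mem_rcons in_cons negb_or eq_sym ntl.
Qed.

Lemma follows_prefix_notin g s t p i :
  follows g s t p -> (i < size p)%N -> t \notin s :: take i p.
Proof.
move=> /(follows_take (n := i.+1)) /follows_notin_belast.
by move=> nt lt; rewrite (take_nth s lt) belast_rcons in nt.
Qed.

Lemma follows_cat g g' s v t p r : follows g s t p -> last s p = v ->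
  follows g' v t r -> (forall h, g (s :: p ++ h) = g' (v :: h)) -> follows g s t (p ++ r).
Proof.
move=> fp lp fr gg' i; rewrite size_cat => lt.
case: (ltnP i (size p)) => [lt_p | le_p]; first by rewrite nth_cat take_cat lt_p; apply: fp.
have lt_r : (i - size p < size r)%N by rewrite ltn_subLR.
rewrite nth_cat take_cat ltnNge le_p /= last_cat lp gg' (set_nth_default v) //.
exact: fr.
Qed.

End Policies.

Lemma run_play (V : finType) (A : strategy V) S E w s t k Es n :
  run A S E w s t k Es n = play (fun h => A S E w s t k h (revealed Es h)) s t n.
Proof. by elim: n => //= n ->. Qed.

Section Occurrences.
Variable T : eqType.
Implicit Types (a v : T) (q : seq T).

Lemma split_first_occ v a q : v \in a :: q ->
  exists q1 r, [/\ q = q1 ++ r, last a q1 = v & v \notin belast a q1].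
Proof.
elim: q a => [|b q IH] a; first by rewrite mem_seq1 => /eqP ->; exists [::], [::].
have [-> _ | av] := eqVneq a v; first by exists [::], (b :: q).
rewrite in_cons eq_sym (negbTE av) => /IH [q1 [r [-> lq1 nv]]].
by exists (b :: q1), r; rewrite /= lq1 in_cons eq_sym (negbTE av).
Qed.

Lemma split_last_occ v a q : v \in a :: q ->
  exists m q3, [/\ q = m ++ q3, last a m = v & v \notin q3].
Proof.
elim/last_ind: q => [|q y IH]; first by rewrite mem_seq1 => /eqP ->; exists [::], [::].
have [-> _ | yv] := eqVneq y v; first by exists (rcons q v), [::]; rewrite cats0 last_rcons.
rewrite -rcons_cons mem_rcons in_cons eq_sym (negbTE yv) => /IH [m [q3 [-> lm nv]]].
by exists m, (rcons q3 y); rewrite rcons_cat mem_rcons in_cons eq_sym (negbTE yv).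
Qed.

Lemma split_loop v a q : v \in a :: q -> exists q1 m q3,
  [/\ q = q1 ++ m ++ q3, last a q1 = v, last v m = v, v \notin belast a q1 & v \notin q3].
Proof.
move=> /split_first_occ [q1 [r [-> lq1 nv]]].
have /split_last_occ [m [q3 [-> lm nv3]]] : v \in v :: r by rewrite mem_head.
by exists q1, m, q3.
Qed.

End Occurrences.

Section Walks.
Variables (V : finType) (w : {set V} -> rat).
Implicit Types (E B : {set {set V}}) (a s t : V) (q : seq V).

Lemma walk_cost_cat a q1 q2 :
  walk_cost w a (q1 ++ q2) = walk_cost w a q1 + walk_cost w (last a q1) q2.
Proof. by elim: q1 a => [|b q1 IH] a /=; rewrite ?add0r // IH addrA. Qed.

Lemma open_adj_weight_ge0 E B a b : {in E, forall e, 0 <= w e} ->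
  open_adj E B a b -> 0 <= w [set a; b].
Proof. by move=> w0; rewrite /open_adj /adj inE => /andP [_ /w0]. Qed.

Lemma walk_cost_ge0 E B a q : {in E, forall e, 0 <= w e} ->
  path (open_adj E B) a q -> 0 <= walk_cost w a q.
Proof.
move=> w0; elim: q a => [|b q IH] a //= /andP [ab /IH].
by apply: addr_ge0; apply: open_adj_weight_ge0 ab.
Qed.

Lemma walk_shorten_uniq E B a q : {in E, forall e, 0 <= w e} ->
  path (open_adj E B) a q -> exists q', [/\ path (open_adj E B) a q',
    last a q' = last a q, uniq (a :: q') & walk_cost w a q' <= walk_cost w a q].
Proof.
move=> w0; elim: q a => [|b q IH] a /=; first by exists [::].
case/andP=> ab /IH [q' [pq' lq' uq' cq']].
have wab := open_adj_weight_ge0 w0 ab.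
have [aq' | naq'] := boolP (a \in b :: q'); last first.
  by exists (b :: q'); split; rewrite /= ?ab ?pq' ?lq' ?lerD2l //; apply/andP.
have [m [q3 [Eq' lm nq3]]] := split_last_occ aq'.
move: pq' uq'; rewrite Eq' cat_path lm -cat_cons cat_uniq => /andP [pm pq3] /and3P [_ _ uq3].
exists q3; split => //=; first by rewrite -lq' Eq' last_cat lm.
  by rewrite nq3.
apply: le_trans (lerD (lexx _) cq'); rewrite Eq' walk_cost_cat lm.
by rewrite addrA lerDr addr_ge0 // (walk_cost_ge0 w0 pm).
Qed.

Lemma shortest_dist_exists E B s t q : {in E, forall e, 0 <= w e} ->
  path (open_adj E B) s q -> last s q = t -> exists d, shortest_dist E B w s t d.
Proof.
move=> w0 pq lq.
(* Simple walks have fewer than #|V| steps, so they live in a finite type. *)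
pose P (x : {n : 'I_#|V| & n.-tuple V}) : bool :=
  path (open_adj E B) s (tagged x) && (last s (tagged x) == t).
have short p : path (open_adj E B) s p -> last s p = t ->
    exists2 x, P x & walk_cost w s (tagged x) <= walk_cost w s p.
  move=> pp lp; have [p' [pp' lp' up' cp']] := walk_shorten_uniq w0 pp.
  have lt : (size p' < #|V|)%N.
    by move/card_uniqP: up' => /= <-; apply: max_card.
  by exists (Tagged (fun n : 'I_#|V| => n.-tuple V) (in_tuple p' : (Ordinal lt).-tuple V));
    rewrite //= /P pp' lp' lp eqxx.
have [x0 Px0 _] := short q pq lq.
have [x /andP [px /eqP lx] minx] :=
  arg_minP (fun x : {n : 'I_#|V| & n.-tuple V} => walk_cost w s (tagged x)) Px0.
exists (walk_cost w s (tagged x)); split; first by exists (tagged x).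
by move=> p pp lp; have [y Py cy] := short p pp lp; apply: le_trans (minx y Py) cy.
Qed.

End Walks.

Section CutComponents.
Variable V : finType.
Implicit Types (S K : {set V}) (E B : {set {set V}}) (a b v x y : V) (q : seq V).

Definition del_edges E v := [set e in E | v \notin e].

Definition induced E K := [set e in E | e \subset K].

(* For a cut vertex v and x <> v, the side of G at v that contains x. *)
Definition cut_component S E v x :=
  v |: [set y in S :\ v | connect (adj (del_edges E v)) x y].

Definition cut_vertex S E v :=
  (v \in S) && ~~ [forall x in S :\ v, forall y in S :\ v, connect (adj (del_edges E v)) x y].

Lemma adj_sym E : symmetric (adj E).
Proof. by move=> x y; rewrite /adj setUC. Qed.

Lemma connect_adj_sym E : connect_sym (adj E).
Proof. exact/sym_connect_sym/adj_sym. Qed.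

Lemma adj_wf S E x y : wf_graph S E -> adj E x y -> [/\ x \in S, y \in S & x != y].
Proof.
move=> wf /wf [card2 sub]; move: sub; rewrite subUset !sub1set => /andP [-> ->].
by move: card2; rewrite cards2; case: (x != y).
Qed.

Lemma adj_del_edges E v x y : adj (del_edges E v) x y = [&& adj E x y, x != v & y != v].
Proof. by rewrite /adj inE in_set2 negb_or (eq_sym v x) (eq_sym v y). Qed.

Lemma open_adj_adj E B : subrel (open_adj E B) (adj E).
Proof. by move=> x y; rewrite /open_adj /adj inE => /andP []. Qed.

Lemma open_path_sub E E' B a q : E' \subset E ->
  path (open_adj E' B) a q -> path (open_adj E B) a q.
Proof.
by move=> sE; apply: sub_path => x y; rewrite /open_adj /adj !inE => /andP [-> /(subsetP sE)].
Qed.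

Lemma induced_sub E K : induced E K \subset E.
Proof. by apply/subsetP => e; rewrite inE => /andP []. Qed.

Lemma wf_path_sub S E a q : wf_graph S E -> a \in S -> path (adj E) a q -> {subset a :: q <= S}.
Proof.
move=> wf; elim: q a => [|b q IH] a aS /=; first by move=> _ y; rewrite mem_seq1 => /eqP ->.
case/andP=> /(adj_wf wf) [_ bS _] /(IH b bS) sub y.
by rewrite in_cons => /predU1P [-> // | /sub].
Qed.

Lemma path_del_edges E v a q : path (adj E) a q -> v \notin a :: q ->
  path (adj (del_edges E v)) a q.
Proof.
elim: q a => [|b q IH] a //= /andP [ab pq].
rewrite !in_cons !negb_or => /and3P [av bv nq].
by rewrite adj_del_edges ab (eq_sym a) (eq_sym b) av bv IH // in_cons negb_or bv.
Qed.

Lemma path_induced E K a q : {subset a :: q <= K} -> path (adj E) a q ->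
  path (adj (induced E K)) a q.
Proof.
elim: q a => [|b q IH] a //= sub /andP [ab pq].
have aK : a \in K by apply: sub; rewrite mem_head.
have bK : b \in K by apply: sub; rewrite !in_cons eqxx orbT.
have -> : adj (induced E K) a b by rewrite /adj inE subUset !sub1set aK bK !andbT.
by apply: IH pq => y yq; apply: sub; rewrite in_cons yq orbT.
Qed.

Lemma path_induced_open E B K a q : {subset a :: q <= K} -> path (open_adj E B) a q ->
  path (open_adj (induced E K) B) a q.
Proof.
have -> : open_adj (induced E K) B = adj (induced (E :\: B) K).
  by congr adj; apply/setP => e; rewrite !inE andbA.
exact: path_induced.
Qed.

Section OneComponent.
Variables (S : {set V}) (E : {set {set V}}) (v : V).
Hypotheses (wf : wf_graph S E) (vS : v \in S).

Lemma mem_cut_component x y : (y \in cut_component S E v x) =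
  (y == v) || [&& y \in S, y != v & connect (adj (del_edges E v)) x y].
Proof. by rewrite in_setU1 inE in_setD1 andbA (andbC (y != v)) -andbA. Qed.

Lemma cut_component_sub x : cut_component S E v x \subset S.
Proof. by apply/subsetP => y; rewrite mem_cut_component => /predU1P [-> | /and3P []]. Qed.

Lemma cut_component_cut x : v \in cut_component S E v x.
Proof. by rewrite mem_cut_component eqxx. Qed.

Lemma cut_component_self x : x \in S -> x \in cut_component S E v x.
Proof. by move=> xS; rewrite mem_cut_component xS connect0 andbT; case: eqP. Qed.

Lemma cut_component_card x : cut_vertex S E v -> (#|cut_component S E v x| < #|S|)%N.
Proof.
case/andP=> _ /forallPn [y] /[!negb_imply] /andP [yS /forallPn [z]].
rewrite negb_imply => /andP [zS nyz].
move: yS zS; rewrite !in_setD1 => /andP [yv yS] /andP [zv zS].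
apply/proper_card/properP; split; first exact: cut_component_sub.
have [yK | nyK] := boolP (y \in cut_component S E v x); last by exists y.
exists z => //; apply: contra nyz; move: yK.
rewrite !mem_cut_component (negbTE yv) (negbTE zv) /= => /andP [_ xy] /andP [_ xz].
by rewrite (connect_trans _ xz) // connect_adj_sym.
Qed.

Lemma path_in_cut_component x a q : a \in cut_component S E v x -> path (adj E) a q ->
  v \notin belast a q -> {subset a :: q <= cut_component S E v x}.
Proof.
elim: q a => [|b q IH] a aK /=; first by move=> _ _ y; rewrite mem_seq1 => /eqP ->.
case/andP=> ab pq /[!in_cons] /norP [av nq].
have bK : b \in cut_component S E v x.
  rewrite mem_cut_component; have [// | bv /=] := eqVneq b v.
  have [_ bS _] := adj_wf wf ab; move: aK; rewrite mem_cut_component eq_sym (negbTE av).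
  case/and3P=> _ _ xa; rewrite bS (connect_trans xa) ?connect1 //.
  by rewrite adj_del_edges ab (eq_sym a) av bv.
by move=> y; rewrite in_cons => /predU1P [-> // | /(IH b bK pq nq)].
Qed.

Lemma path_from_cut_vertex x q : path (adj E) v q -> v \notin q ->
  last v q \in cut_component S E v x -> {subset v :: q <= cut_component S E v x}.
Proof.
case: q => [|b q] /=.
  by move=> _ _ _ y; rewrite mem_seq1 => /eqP ->; apply: cut_component_cut.
case/andP=> vb pq nvq lK; have [_ bS _] := adj_wf wf vb.
have dq := path_del_edges pq nvq.
have lv : last b q != v by apply: contraNneq nvq => <-; apply: mem_last.
move: lK; rewrite mem_cut_component (negbTE lv) => /and3P [_ _ xl].
move=> y; rewrite in_cons => /predU1P [-> | yq]; first exact: cut_component_cut.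
have yv : y != v by apply: contraNneq nvq => <-.
rewrite mem_cut_component (negbTE yv) (wf_path_sub wf bS pq yq) /=.
have by_ : connect (adj (del_edges E v)) b y := path_connect dq yq.
have lb : connect (adj (del_edges E v)) (last b q) b.
  by rewrite connect_adj_sym; apply: (path_connect dq); apply: mem_last.
exact: connect_trans xl (connect_trans lb by_).
Qed.

Lemma cut_component_wf x : wf_graph (cut_component S E v x) (induced E (cut_component S E v x)).
Proof. by move=> e /[!inE] /andP [/wf []]. Qed.

Lemma cut_component_connected x : gconnected S E ->
  gconnected (cut_component S E v x) (induced E (cut_component S E v x)).
Proof.
move=> conn; set K := cut_component S E v x.
suff to_v y : y \in K -> connect (adj (induced E K)) y v.
  by move=> y z /to_v yv /to_v zv; rewrite (connect_trans yv) // connect_adj_sym.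
move=> yK; have yS := subsetP (cut_component_sub x) y yK.
have /connectP [p py lp] := conn y v yS vS.
have : v \in y :: p by rewrite lp mem_last.
case/split_first_occ=> q1 [r [Ep l1 n1]].
move: py; rewrite Ep cat_path => /andP [p1 _].
apply/connectP; exists q1 => //.
exact: path_induced (path_in_cut_component yK p1 n1) p1.
Qed.

Lemma cut_component_separated s t : ~~ connect (adj (del_edges E v)) s t ->
  t \in cut_component S E v s -> t = v.
Proof. by move=> nst; rewrite mem_cut_component (negbTE nst) !andbF orbF => /eqP. Qed.

Lemma walk_hits_separator s t q : ~~ connect (adj (del_edges E v)) s t ->
  path (adj E) s q -> last s q = t -> v \in s :: q.
Proof.
move=> nst pq lq; move: nst; apply: contraNT => nvq.
by apply/connectP; exists q; rewrite ?lq //; apply: path_del_edges.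
Qed.

Variable w : {set V} -> rat.
Hypothesis w_ge0 : {in E, forall e, 0 <= w e}.

Lemma walk_through_cut_vertex B x y a q :
  a \in cut_component S E v x -> last a q \in cut_component S E v y ->
  path (open_adj E B) a q -> v \in a :: q -> exists q1 q3,
  [/\ path (open_adj (induced E (cut_component S E v x)) B) a q1, last a q1 = v,
      path (open_adj (induced E (cut_component S E v y)) B) v q3, last v q3 = last a q &
      walk_cost w a q1 + walk_cost w v q3 <= walk_cost w a q].
Proof.
move=> aK lK pq /split_loop [q1 [m [q3 [Eq l1 lm n1 n3]]]].
move: pq lK; rewrite Eq !cat_path !last_cat l1 lm => /and3P [p1 pm p3] lK.
exists q1, q3; split => //.
- apply: path_induced_open (p1).
  exact: path_in_cut_component aK (sub_path (@open_adj_adj E B) p1) n1.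
- apply: path_induced_open (p3).
  exact: path_from_cut_vertex (sub_path (@open_adj_adj E B) p3) n3 lK.
- by rewrite !walk_cost_cat l1 lm lerD2l lerDr (walk_cost_ge0 w_ge0 pm).
Qed.

Lemma walk_in_cut_component B x s t q :
  s \in cut_component S E v x -> t \in cut_component S E v x ->
  path (open_adj E B) s q -> last s q = t ->
  exists2 q', path (open_adj (induced E (cut_component S E v x)) B) s q' &
    last s q' = t /\ walk_cost w s q' <= walk_cost w s q.
Proof.
move=> sK tK pq lq; have [vq | nvq] := boolP (v \in s :: q).
  rewrite -lq in tK; have [q1 [q3 [p1 l1 p3 l3 c]]] := walk_through_cut_vertex sK tK pq vq.
  exists (q1 ++ q3); first by rewrite cat_path p1 l1.
  by rewrite last_cat l1 l3 walk_cost_cat l1.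
have apq := sub_path (@open_adj_adj E B) pq.
exists q => //; apply: path_induced_open pq => y yq.
have yv : y != v by apply: contraNneq nvq => <-.
have sv : s != v by apply: contraNneq nvq => <-; apply: mem_head.
have sS := subsetP (cut_component_sub x) s sK.
rewrite mem_cut_component (negbTE yv) (wf_path_sub wf sS apq yq) /=.
move: sK; rewrite mem_cut_component (negbTE sv) => /and3P [_ _ xs].
exact: connect_trans xs (path_connect (path_del_edges apq nvq) yq).
Qed.

End OneComponent.

Lemma cut_vertexP S E v : reflect (is_articulation_point S E v) (cut_vertex S E v).
Proof.
apply: (iffP andP) => [[vS nconn] | [vS nconn]]; split => //.
  move=> conn; move/forallP: nconn; apply=> x; apply/implyP => xS.
  by apply/forallP => y; apply/implyP => yS; apply: conn.
apply/negP => /forallP conn; apply: nconn => x y xS yS.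
by move: (conn x); rewrite xS => /forallP /(_ y); rewrite yS.
Qed.

End CutComponents.

Lemma revealed_subset (V : finType) (Es : {set {set V}}) (h h' : seq V) :
  {subset h <= h'} -> revealed Es h \subset revealed Es h'.
Proof.
move=> hh'; apply/subsetP => e /[!inE] /andP [-> /hasP [x /hh' xh' xe]].
by apply/hasP; exists x.
Qed.

Lemma revealed_restrict (V : finType) (Es rev E : {set {set V}}) (h : seq V) :
  revealed Es h \subset rev -> rev \subset Es ->
  revealed (rev :&: E) h = revealed (Es :&: E) h.
Proof.
move=> sub_rev rev_sub; apply/setP => e; rewrite !inE.
case: (e \in E); rewrite ?andbF ?andbT //=.
case he: (has _ h); rewrite ?andbF ?andbT //.
apply/idP/idP => [/(subsetP rev_sub) // | eEs].
by apply: (subsetP sub_rev); rewrite inE eEs.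
Qed.

Section Reduction.
Variables (V : finType) (A : strategy V) (w : {set V} -> rat) (k : nat).
Implicit Types (S : {set V}) (E : {set {set V}}) (s t v : V) (h : seq V).

(* [n] is fuel: #|S| suffices since cut components are smaller than S.  Once
   the traveller has reached a separating cut vertex v, the history is
   restarted at (the first visit of) v, while [rev] keeps everything revealed
   so far; [rev :&: E] hides the blocked edges outside the current part. *)
Fixpoint reduce n S E s t h (rev : {set {set V}}) : V :=
  match n, [pick v | cut_vertex S E v] with
  | n'.+1, Some v =>
    if connect (adj (del_edges E v)) s t then
      reduce n' (cut_component S E v s) (induced E (cut_component S E v s)) s t h rev
    else if v \in h then
      reduce n' (cut_component S E v t) (induced E (cut_component S E v t)) v t
        (drop (index v h) h) rev
    else reduce n' (cut_component S E v s) (induced E (cut_component S E v s)) s v h rev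
  | _, _ => A S E w s t k h (revealed (rev :&: E) h)
  end.

Definition policy n S E s t (rho : seq V -> {set {set V}}) h := reduce n S E s t h (rho h).

Variables (R : realType) (F : {set V} -> {set {set V}} -> Prop) (C : R) (Es : {set {set V}}).
Hypotheses (C_ge0 : 0 <= C) (F_mono : monotone_family F) (Es_k : (#|Es| <= k)%N).
Hypothesis A_biconnected : forall S E s t Es', road_map S E w s t k Es' -> F S E ->
  no_articulation_point S E -> ratio_at_most A S E w s t k Es' C.

Definition instance S E s t := [/\ wf_graph S E, gconnected S E, {in E, forall e, 0 < w e},
  F S E & [/\ s \in S, t \in S & connect (open_adj E Es) s t]].

(* [rho] may know blocked edges revealed before the history was restarted at
   [s], but only truly blocked ones. *)
Definition reveals (rho : seq V -> {set {set V}}) s :=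
  forall h, revealed Es (s :: h) \subset rho (s :: h) /\ rho (s :: h) \subset Es.

Definition competitive E s t (g : seq V -> V) := exists p,
  [/\ follows g s t p, last s p = t, path (open_adj E Es) s p &
      forall q, path (open_adj E Es) s q -> last s q = t ->
        ratr (walk_cost w s p) <= C * ratr (walk_cost w s q)].

Lemma competitive_refl E s g : {in E, forall e, 0 <= w e} -> competitive E s s g.
Proof.
move=> w0; exists [::]; split => // q pq _.
by rewrite rmorph0 mulr_ge0 // ler0q (walk_cost_ge0 w0 pq).
Qed.

Lemma competitive_sub E E' s t g : E' \subset E ->
  (forall q, path (open_adj E Es) s q -> last s q = t -> exists2 q',
     path (open_adj E' Es) s q' & last s q' = t /\ walk_cost w s q' <= walk_cost w s q) ->
  competitive E' s t g -> competitive E s t g.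
Proof.
move=> sE short [p [f lp pp b]]; exists p; split => //.
  exact: open_path_sub sE pp.
move=> q pq lq; have [q' pq' [lq' cq']] := short q pq lq.
by apply: le_trans (b q' pq' lq') _; rewrite ler_wpM2l // ler_rat.
Qed.

Lemma competitive_cat E E1 E2 s v t g g1 (g2 : seq V -> seq V -> V) :
  E1 \subset E -> E2 \subset E ->
  (forall q, path (open_adj E1 Es) s q -> t \in s :: q -> t = v) ->
  (forall q, path (open_adj E Es) s q -> last s q = t -> exists q1 q3,
     [/\ path (open_adj E1 Es) s q1, last s q1 = v, path (open_adj E2 Es) v q3,
         last v q3 = t & walk_cost w s q1 + walk_cost w v q3 <= walk_cost w s q]) ->
  (forall h, v \notin s :: h -> g (s :: h) = g1 (s :: h)) ->
  (forall p1 h, last s p1 = v -> v \notin belast s p1 -> g (s :: p1 ++ h) = g2 p1 (v :: h)) ->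
  competitive E1 s v g1 ->
  (forall p1, last s p1 = v -> v \notin belast s p1 -> competitive E2 v t (g2 p1)) ->
  competitive E s t g.
Proof.
move=> sE1 sE2 tK1 split_walk eq1 eq2 [p1 [f1 l1 w1 b1]] c2.
have nv1 : v \notin belast s p1 := follows_notin_belast f1.
have [r [f2 l2 w2 b2]] := c2 p1 l1 nv1.
have f1' : follows g s t p1.
  move=> i lt_i; have [e1 ne] := f1 i lt_i; have nvi := follows_prefix_notin f1 lt_i.
  split; first by rewrite e1 eq1.
  apply/eqP => li; have tv : t = v.
    apply: (tK1 p1 w1); rewrite -li; have := mem_last s (take i p1).
    by rewrite !in_cons => /predU1P [-> | /mem_take ->]; rewrite ?eqxx ?orbT.
  by move: nvi; rewrite -tv -li mem_last.
exists (p1 ++ r); split.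
- exact: follows_cat f1' l1 f2 (fun h => eq2 p1 h l1 nv1).
- by rewrite last_cat l1.
- by rewrite cat_path l1 (open_path_sub sE1 w1) (open_path_sub sE2 w2).
move=> q pq lq; have [q1 [q3 [pq1 lq1 pq3 lq3 cq]]] := split_walk q pq lq.
rewrite walk_cost_cat l1 rmorphD; apply: le_trans (lerD (b1 q1 pq1 lq1) (b2 q3 pq3 lq3)) _.
by rewrite -mulrDr -rmorphD ler_wpM2l // ler_rat.
Qed.

Lemma competitive_base S E s t rho : instance S E s t -> s != t ->
  no_articulation_point S E -> reveals rho s ->
  competitive E s t (fun h => A S E w s t k h (revealed (rho h :&: E) h)).
Proof.
move=> [wf conn wpos FS [sS tS st]] neq_st nocut rho_ok.
have open_eq : open_adj E (Es :&: E) =2 open_adj E Es.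
  by move=> x y; rewrite /open_adj /adj !inE; case: ([set x; y] \in E); rewrite ?andbF ?andbT.
have Es_proper : Es :&: E \proper E.
  move/connectP: st => [[|b q] /= pq lq]; first by rewrite lq eqxx in neq_st.
  case/andP: pq => + _; rewrite /open_adj /adj inE => /andP [nEs sbE].
  apply/properP; split; [exact: subsetIr | exists [set s; b] => //].
  by rewrite inE (negbTE nEs).
have rm : road_map S E w s t k (Es :&: E).
  split=> //; split=> //; last by rewrite (eq_connect open_eq).
  exact: leq_trans (subset_leq_card (subsetIl _ _)) Es_k.
have [n /= [ln pn bn]] := A_biconnected rm FS nocut.
exists (run A S E w s t k (Es :&: E) n); split => //.
- rewrite run_play; apply: eq_follows; last exact: play_follows.
  by move=> h; have [r1 r2] := rho_ok h; rewrite (revealed_restrict _ r1 r2).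
- by rewrite -(eq_path open_eq).
move=> q pq lq; rewrite -(eq_path open_eq) in pq.
have w0 : {in E, forall e, 0 <= w e} by move=> e /wpos /ltW.
have [d sd] := shortest_dist_exists w0 pq lq.
by apply: le_trans (bn d sd) _; rewrite ler_wpM2l // ler_rat; case: sd => _; apply.
Qed.

Lemma instance_cut_component S E s t v x s' t' : instance S E s t -> v \in S ->
  s' \in cut_component S E v x -> t' \in cut_component S E v x ->
  connect (open_adj (induced E (cut_component S E v x)) Es) s' t' ->
  instance (cut_component S E v x) (induced E (cut_component S E v x)) s' t'.
Proof.
move=> [wf conn wpos FS _] vS sK tK st; split => //.
- exact: cut_component_wf.
- exact: cut_component_connected.
- by move=> e /[!inE] /andP [/wpos].
apply: F_mono FS; [exact: cut_component_wf | exact: cut_component_sub | exact: induced_sub].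
Qed.

Section CutVertexStep.
Variable n : nat.
Hypothesis IHn : forall S E s t rho, (#|S| <= n)%N -> instance S E s t -> reveals rho s ->
  competitive E s t (policy n S E s t rho).
Variables (S : {set V}) (E : {set {set V}}) (s t v : V) (rho : seq V -> {set {set V}}).
Hypotheses (inst : instance S E s t) (rho_ok : reveals rho s) (vS : v \in S).
Hypothesis small : forall x, (#|cut_component S E v x| <= n)%N.

Lemma competitive_avoiding_cut_vertex : connect (adj (del_edges E v)) s t ->
  competitive E s t (policy n (cut_component S E v s) (induced E (cut_component S E v s)) s t rho).
Proof.
move=> conn_st; have [wf _ wpos _ [sS tS st]] := inst.
have w0 : {in E, forall e, 0 <= w e} by move=> e /wpos /ltW.
have sK := cut_component_self E v sS.
have tK : t \in cut_component S E v s.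
  by rewrite mem_cut_component tS conn_st !andbT; case: eqP.
have short := walk_in_cut_component wf vS w0 (B := Es) sK tK.
apply: competitive_sub (induced_sub _ _) (short) _.
apply: IHn (small s) _ rho_ok; apply: instance_cut_component inst vS sK tK _.
have /connectP [q pq lq] := st; have [q' pq' [lq' _]] := short q pq (esym lq).
by apply/connectP; exists q'.
Qed.

Lemma competitive_through_cut_vertex : ~~ connect (adj (del_edges E v)) s t ->
  competitive E s t (fun h => if v \in h then
      reduce n (cut_component S E v t) (induced E (cut_component S E v t)) v t
        (drop (index v h) h) (rho h)
    else reduce n (cut_component S E v s) (induced E (cut_component S E v s)) s v h (rho h)).
Proof.
move=> sep_st; have [wf _ wpos _ [sS tS st]] := inst.
have w0 : {in E, forall e, 0 <= w e} by move=> e /wpos /ltW.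
have sK := cut_component_self E v sS; have tK := cut_component_self E v tS.
have vK x := cut_component_cut S E v x.
have split_walk q : path (open_adj E Es) s q -> last s q = t -> exists q1 q3,
    [/\ path (open_adj (induced E (cut_component S E v s)) Es) s q1, last s q1 = v,
        path (open_adj (induced E (cut_component S E v t)) Es) v q3, last v q3 = t &
        walk_cost w s q1 + walk_cost w v q3 <= walk_cost w s q].
  move=> pq lq; have lK : last s q \in cut_component S E v t by rewrite lq.
  have vq := walk_hits_separator sep_st (sub_path (@open_adj_adj _ _ _) pq) lq.
  have [q1 [q3 [pq1 lq1 pq3 lq3 cq]]] := walk_through_cut_vertex wf w0 sK lK pq vq.
  by exists q1, q3; split => //; rewrite lq3.
have /connectP [q0 pq0 lq0] := st.
have [q1 [q3 [pq1 lq1 pq3 lq3 _]]] := split_walk q0 pq0 (esym lq0).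
apply: (competitive_cat (g1 := policy n _ _ s v rho)
  (g2 := fun p1 => policy n _ _ v t (fun h => rho (s :: p1 ++ behead h))))
  (induced_sub _ _) (induced_sub _ _) _ split_walk _ _ _ _.
- move=> q pq tq; apply: (cut_component_separated sep_st).
  have Kq := wf_path_sub (cut_component_wf (x := s) wf) sK (sub_path (@open_adj_adj _ _ _) pq).
  exact: Kq _ tq.
- by move=> h /negbTE /= ->.
- move=> p1 h lp1 nv; cbv beta.
  have hist : s :: p1 ++ h = belast s p1 ++ v :: h by rewrite -cat_rcons -lp1 -lastI.
  rewrite hist mem_cat mem_head orbT index_cat (negbTE nv) /= eqxx addn0 drop_size_cat //.
  by rewrite -hist.
- apply: IHn (small s) _ rho_ok; apply: instance_cut_component inst vS sK (vK s) _.
  by apply/connectP; exists q1.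
move=> p1 lp1 _; apply: IHn (small t) _ _.
  by apply: instance_cut_component inst vS (vK t) tK _; apply/connectP; exists q3.
move=> h /=; have [r1 r2] := rho_ok (p1 ++ h); split => //.
apply: subset_trans r1; apply: revealed_subset => x; rewrite in_cons => /predU1P [-> | xh].
  by rewrite -lp1 -cat_cons mem_cat mem_last.
by rewrite in_cons mem_cat xh !orbT.
Qed.

End CutVertexStep.

Lemma policy_competitive n S E s t rho : (#|S| <= n)%N -> instance S E s t -> reveals rho s ->
  competitive E s t (policy n S E s t rho).
Proof.
elim: n S E s t rho => [|n IH] S E s t rho leSn inst rho_ok;
  have [wf conn wpos FS [sS tS st]] := inst.
  by move: leSn; rewrite leqn0 => /eqP /cards0_eq S0; rewrite S0 inE in sS.
have [<- | neq_st] := eqVneq s t.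
  by apply: competitive_refl => e /wpos /ltW.
rewrite /policy /=; case: pickP => [v cut_v | nocut]; last first.
  by apply: competitive_base => // u /cut_vertexP; rewrite nocut.
have vS : v \in S by case/andP: cut_v.
have small x : (#|cut_component S E v x| <= n)%N.
  by rewrite -ltnS (leq_trans (cut_component_card vS x cut_v) leSn).
case: (boolP (connect (adj (del_edges E v)) s t)) => [conn_st | sep_st].
  exact: competitive_avoiding_cut_vertex.
exact: competitive_through_cut_vertex.
Qed.

End Reduction.

Theorem mainTheorem4 (R : realType) (V : finType)
    (F : {set V} -> {set {set V}} -> Prop) (C : R) (k : nat) (A : strategy V) :
  monotone_family F -> 1 <= C ->
  (forall S E w s t Es, road_map S E w s t k Es -> F S E ->
     no_articulation_point S E -> ratio_at_most A S E w s t k Es C) ->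
  exists A' : strategy V,
    forall S E w s t Es, road_map S E w s t k Es -> F S E ->
      ratio_at_most A' S E w s t k Es C.
Proof.
move=> F_mono C_ge1 A_biconnected; have C_ge0 : 0 <= C := le_trans ler01 C_ge1.
exists (fun (S : {set V}) E w s t k h rev => reduce A w k #|S| S E s t h rev).
move=> S E w s t Es [wf conn wpos [sS tS] [_ Es_k st]] FS.
have rho_ok : reveals Es (revealed Es) s.
  by move=> h; split; last apply/subsetP => e /[!inE] /andP [].
have [p [f lp pp b]] := policy_competitive C_ge0 F_mono Es_k (fun S E => A_biconnected S E w)
  (leqnn #|S|) (And5 wf conn wpos FS (And3 sS tS st)) rho_ok.
exists (size p) => /=; rewrite run_play (follows_play f); split => //.
by move=> d [[q [pq [lq <-]]] _]; apply: b.
Qed.
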